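(* Let $(W,S)$ be a Coxeter system of finite rank with just one bad 5-edge $\{x,y\}$. Let $B_1,\dots,B_n$ ($n\ge0$) be the distinct bad separators of $S$, let $F_i$ be the set of good foci of $B_i$, and put $S_i=B_i\cup F_i$. Then there is a unique subset $S_0\subseteq S$ such that $S_0,S_1,\dots,S_n$ form a reduced visual star decomposition of $(W,S)$ with center $S_0$, namely: $S=S_0\cup S_1\cup\dots\cup S_n$; $S_0\cap S_i=B_i$ is a proper subset of both $S_0$ and $S_i$ for each $i\ge1$; $S_i\cap S_j\subseteq S_0$ for distinct $i,j\ge1$; and any $s,t\in S$ with $m(s,t)<\infty$ lie in a common $S_i$ (so $W$ is the fundamental group of the star of groups with center vertex group $\langle S_0\rangle$, leaf vertex groups $\langle S_i\rangle$ and edge groups $\langle B_i\rangle$); and moreover $\{x,y\}\subseteq S_0$ and $S_0$ has no bad separators (with respect to the Coxeter system $(\langle S_0\rangle,S_0)$ and the bad edge $\{x,y\}$). Equivalently, $(W,S)$ has a unique reduced visual graph of groups decomposition whose graph is a star, whose center vertex system $(\langle S_0\rangle,S_0)$ satisfies $\{x,y\}\subseteq S_0$ and has no bad separators, whose edge systems are $(\langle B_i\rangle,B_i)$ for the bad separators $B_1,\dots,B_n$, and whose other vertex systems $(\langle S_i\rangle,S_i)$ satisfy $B_i=S_0\cap S_i$ and $S_i-B_i=F_i$.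
   Context: Coxeter system $(W,S)$: $W=\langle S\mid (st)^{m(s,t)}\ (m(s,t)<\infty)\rangle$, $m(s,s)=1$, $m(s,t)=m(t,s)\in\{2,\dots,\infty\}$; $\langle A\rangle$ the visual subgroup generated by $A\subseteq S$. $\Gamma(W,S)$: labeled graph on $S$ with edge $\{s,t\}$ iff $s\neq t$, $m(s,t)<\infty$. A simplex is $A\subseteq S$ with all $m(s,t)<\infty$; $A$ is irreducible if the graph on $A$ with edges $m(s,t)\ge3$ is connected; maximal irreducible simplex: not properly contained in another irreducible simplex. $A^\perp=\{s\in S: m(s,a)=2\ \forall a\in A\}$. Types ${\bf G}_3,{\bf G}_4$: Coxeter diagram a path with labels $3,5$ resp. $3,3,5$. A set of bad edges is a set $\mathcal B_2$ of pairs $\{a,b\}\subseteq S$ with $5\le m(a,b)<\infty$ such that every irreducible simplex properly containing $\{a,b\}$ has type ${\bf G}_3$ or ${\bf G}_4$; ''just one bad 5-edge $\{x,y\}$'' means $\mathcal B_2=\{\{x,y\}\}$ and $m(x,y)=5$. An irreducible simplex is bad if it contains a bad edge. Separation $(S_1,S_0,S_2)$: $S=S_1\cup S_2$, $S_0=S_1\cap S_2$, $S_i-S_0\ne\emptyset$, $m(s,t)=\infty$ for $s\in S_1-S_0$, $t\in S_2-S_0$. $B$ is a $(c,f)$-separator if there is a separation $(S_1,B,S_2)$ with $c\in S_1-B$, $f\in S_2-B$ (equivalently $c,f$ lie in different components of $\Gamma(W,S)-B$); minimal if no proper subset is one. A bad separator of $S$ is a subset $B\subseteq S$ for which there are $a,b\in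 B$ with $m(a,b)=2$ (eyes) and $c\in S-B$ such that $A=\{a,b,c\}$ is a bad maximal irreducible simplex, $B\subseteq\{a,b\}\cup A^\perp$, and there exists $f\in S-B$ such that $B$ is a minimal $(c,f)$-separator of $S$; every such $f$ is a good focus of $B$. *)

From mathcomp Require Import all_boot.
Set Implicit Arguments.
Unset Strict Implicit.
Unset Printing Implicit Defensive.

Section Coxeter.
Variable T : finType.
(* Coxeter matrix; the value 0 encodes m(s,t) = infinity. *)
Variable m : T -> T -> nat.

Definition coxeter_matrix : Prop :=
  (forall s, m s s = 1) /\ (forall s t, m s t = m t s) /\
  (forall s t, s != t -> m s t != 1).

Definition fin_m (s t : T) : bool := m s t != 0.

Definition simplex (A : {set T}) : Prop :=
  forall s t, s \in A -> t \in A -> fin_m s t.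

Definition irreducible (A : {set T}) : Prop :=
  A != set0 /\
  forall s t, s \in A -> t \in A ->
    connect (fun u v => [&& u \in A, v \in A & 3 <= m u v]) s t.

Definition irr_simplex (A : {set T}) : Prop := simplex A /\ irreducible A.

Definition max_irr_simplex (U A : {set T}) : Prop :=
  A \subset U /\ irr_simplex A /\
  forall A' : {set T}, A' \subset U -> irr_simplex A' -> ~ (A \proper A').

Definition type_G3 (A : {set T}) : Prop :=
  exists a b c, A = [set a; b; c] /\ m a b = 3 /\ m b c = 5 /\ m a c = 2.

Definition type_G4 (A : {set T}) : Prop :=
  exists a b c d, A = [set a; b; c; d] /\
    m a b = 3 /\ m b c = 3 /\ m c d = 5 /\
    m a c = 2 /\ m a d = 2 /\ m b d = 2.

(* {x,y} may serve as a bad edge (member of a set of bad edges) *)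
Definition bad_edge_ok (x y : T) : Prop :=
  x != y /\ 5 <= m x y /\ fin_m x y /\
  forall A, irr_simplex A -> [set x; y] \proper A -> type_G3 A \/ type_G4 A.

(* with the single bad edge {x,y}: an irreducible simplex is bad iff it contains {x,y} *)
Definition bad_simplex (x y : T) (A : {set T}) : Prop :=
  irr_simplex A /\ x \in A /\ y \in A.

Definition perp (U A : {set T}) : {set T} :=
  [set s in U | [forall a in A, m s a == 2]].

Definition separator (U B : {set T}) (c f : T) : Prop :=
  exists S1 S2 : {set T},
    S1 :|: S2 = U /\ S1 :&: S2 = B /\
    c \in S1 :\: B /\ f \in S2 :\: B /\
    forall s t, s \in S1 :\: B -> t \in S2 :\: B -> m s t = 0.

Definition min_separator (U B : {set T}) (c f : T) : Prop :=
  separator U B c f /\ forall B' : {set T}, B' \proper B -> ~ separator U B' c f.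

(* witness data (eyes a b, vertex c, focus f) making B a bad separator of U *)
Definition bad_sep_wit (x y : T) (U B : {set T}) (a b c f : T) : Prop :=
  B \subset U /\ a \in B /\ b \in B /\ m a b = 2 /\
  c \in U :\: B /\
  bad_simplex x y [set a; b; c] /\ max_irr_simplex U [set a; b; c] /\
  B \subset [set a; b] :|: perp U [set a; b; c] /\
  f \in U :\: B /\ min_separator U B c f.

Definition bad_separator (x y : T) (U B : {set T}) : Prop :=
  exists a b c f, bad_sep_wit x y U B a b c f.

Definition good_focus (x y : T) (U B : {set T}) (f : T) : Prop :=
  exists a b c, bad_sep_wit x y U B a b c f.

End Coxeter.

From mathcomp Require Import all_boot.

Set Implicit Arguments.
Unset Strict Implicit.
Unset Printing Implicit Defensive.

(* Every bad separator B comes with a vertex c in {x, y}, and B lies in the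
   common neighbourhood of x and y, whereas the good foci of B are closed
   under adjacency in Gamma - B and are all non-adjacent to c.  Minimality of
   B forces every vertex of B to be adjacent to the component of a focus, so
   two bad separators sharing a focus coincide.  Hence the foci of distinct
   bad separators are disjoint, the center can only be the complement S0 of
   all foci, and a bad separator of S0 would lift to a bad separator of S
   whose focus lies in S0. *)

Lemma connect_ind (T : finType) (e : rel T) (x : T) (P : T -> Prop) :
  P x -> (forall u v, connect e x u -> P u -> e u v -> P v) ->
  forall y, connect e x y -> P y.
Proof.
move=> Px step y /connectP[p].
elim/last_ind: p y => [|p u IHp] y /=; first by move=> _ ->.
rewrite rcons_path last_rcons => /andP[e_p e_u] ->.
apply: step e_u; last exact: IHp e_p erefl.
by apply/connectP; exists p.
Qed.

Section Separators.
Variables (T : finType) (m : T -> T -> nat).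
Implicit Types (U V B K : {set T}).

Lemma separator_nonadj U B c f : separator m U B c f -> m c f = 0.
Proof. by case=> [S1 [S2 [_ [_ [c1 [f2 nonadj]]]]]]; apply: nonadj. Qed.

Lemma separator_focus_mem U B c f : separator m U B c f -> f \in U :\: B.
Proof.
case=> [S1 [S2 [<- [_ [_ [f2 _]]]]]].
by move: f2; rewrite !inE => /andP[-> ->]; rewrite orbT.
Qed.

Lemma separator_restrict U V B c f :
  separator m U B c f -> V \subset U -> B \subset V -> c \in V -> f \in V ->
  separator m V B c f.
Proof.
case=> [S1 [S2 [defU [defB [c1 [f2 nonadj]]]]]] VU BV cV fV.
exists (S1 :&: V), (S2 :&: V); split; first by rewrite -setIUl defU; apply/setIidPr.
split; first by rewrite setIACA setIid defB; apply/setIidPl.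
rewrite !in_setD !in_setI; move: c1 f2; rewrite !in_setD => /andP[-> ->] /andP[-> ->].
split; first by rewrite cV.
split; first by rewrite fV.
move=> s t /setDP[/setIP[s1 _] sB] /setDP[/setIP[t2 _] tB].
by apply: nonadj; apply/setDP.
Qed.

Hypothesis m_sym : forall s t, m s t = m t s.

Definition adj_minus (U B : {set T}) : rel T :=
  fun u v => [&& u \in U :\: B, v \in U :\: B & m u v != 0].

Lemma separator_adj U B c s t :
  separator m U B c s -> m s t != 0 -> t \in U :\: B -> separator m U B c t.
Proof.
case=> [S1 [S2 [defU [defB [c1 [s2 nonadj]]]]]] mst tUB.
exists S1, S2; do 3!split => //; split => //.
case/setDP: tUB; rewrite -defU inE => /orP[t1|t2] tB; last by rewrite inE t2 tB.
by move: mst; rewrite m_sym nonadj // inE t1 tB.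
Qed.

Lemma separator_component U B c f k :
  separator m U B c f -> connect (adj_minus U B) f k -> separator m U B c k.
Proof.
move=> sep; apply: connect_ind => // u v _ sep_u /and3P[_ vUB muv].
exact: separator_adj sep_u muv vUB.
Qed.

Lemma separator_of_closed (K B : {set T}) c f :
  (forall k, k \in K -> k \notin B) -> c \notin K :|: B -> f \in K ->
  (forall s t, t \in K -> s \notin K :|: B -> m s t = 0) ->
  separator m setT B c f.
Proof.
move=> KB cKB fK closedK.
exists (~: K), (K :|: B); split; [|split; [|split; [|split]]].
- by apply/setP => v; rewrite !inE; case: (v \in K).
- apply/setP => v; rewrite !inE; case: (boolP (v \in K)) => vK //=.
  by rewrite (negbTE (KB _ vK)).
- by move: cKB; rewrite !inE negb_or => /andP[-> ->].
- by rewrite !inE fK KB.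
- move=> s t; rewrite !inE => /andP[sB sK] /andP[tB /orP[tK|tB']].
    by apply: closedK; rewrite // inE negb_or sK.
  by rewrite tB' in tB.
Qed.

Lemma adj_minus_connect_sub U B B' f :
  (forall k, connect (adj_minus U B) f k -> k \notin B') ->
  {subset connect (adj_minus U B) f <= connect (adj_minus U B') f}.
Proof.
move=> avoidB' k; rewrite !inE; move: k.
apply: (connect_ind (P := connect (adj_minus U B') f)) => [|u v fu fu' /and3P[uUB vUB muv]].
  exact: connect0.
have fv : connect (adj_minus U B) f v by apply: connect_trans fu (connect1 _); apply/and3P.
apply: connect_trans fu' (connect1 _).
move: uUB vUB; rewrite /adj_minus /= !inE (negbTE (avoidB' _ fu)) (negbTE (avoidB' _ fv)) muv.
by move=> /andP[_ ->] /andP[_ ->].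
Qed.

End Separators.

Section BadSeparatorWitnesses.
Variables (T : finType) (m : T -> T -> nat) (x y : T).
Implicit Types (U B : {set T}).
Hypotheses (m_sym : forall s t, m s t = m t s) (m_diag : forall s, m s s = 1).
Hypothesis mxy : m x y = 5.

Definition nbr_xy (k : T) : bool := fin_m m x k && fin_m m y k.

Lemma nbr_xy_x : nbr_xy x.
Proof. by rewrite /nbr_xy /fin_m m_diag m_sym mxy. Qed.

Lemma nbr_xy_y : nbr_xy y.
Proof. by rewrite /nbr_xy /fin_m m_diag mxy. Qed.

Lemma bad_sep_wit_nbr U B a b c f v :
  bad_sep_wit m x y U B a b c f -> v \in B -> nbr_xy v.
Proof.
move=> [_ [_ [_ [_ [_ [[[simplexA _] [xA yA]] [_ [Bsub _]]]]]]]] vB.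
have aA : a \in [set a; b; c] by rewrite !inE eqxx.
have bA : b \in [set a; b; c] by rewrite !inE eqxx orbT.
move: (subsetP Bsub v vB); rewrite !inE => /orP[/orP[/eqP->|/eqP->] | /andP[_ /forallP perpv]].
- by rewrite /nbr_xy !simplexA.
- by rewrite /nbr_xy !simplexA.
- move: (implyP (perpv x) xA) (implyP (perpv y) yA) => /eqP mvx /eqP mvy.
  by rewrite /nbr_xy /fin_m m_sym mvx m_sym mvy.
Qed.

(* The eyes a, b commute, so the bad edge {x, y} of {a, b, c} must contain c. *)
Lemma bad_sep_wit_vertex U B a b c f :
  bad_sep_wit m x y U B a b c f -> c = x \/ c = y.
Proof.
move=> [_ [_ [_ [mab [_ [[_ [xA yA]] _]]]]]].
case: (eqVneq c x) => [->|cx]; first by left.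
case: (eqVneq c y) => [->|cy]; first by right.
exfalso; move: xA yA; rewrite !inE (eq_sym x c) (eq_sym y c) (negbTE cx) (negbTE cy) !orbF.
have mba : m b a = 2 by rewrite m_sym.
by case/orP => /eqP ex; case/orP => /eqP ey; subst x y; move: mxy; rewrite ?m_diag ?mab ?mba.
Qed.

Lemma bad_sep_wit_component U B a b c f k :
  bad_sep_wit m x y U B a b c f -> connect (adj_minus m U B) f k -> ~~ nbr_xy k.
Proof.
move=> W fk; have [_ [_ [_ [_ [_ [_ [_ [_ [_ [sep _]]]]]]]]]] := W.
have mck := separator_nonadj (separator_component m_sym sep fk).
by rewrite /nbr_xy /fin_m; case: (bad_sep_wit_vertex W) => <-; rewrite mck ?andbF.
Qed.

Lemma bad_sep_wit_focus_adj B a b c s t :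
  bad_sep_wit m x y setT B a b c s -> m s t != 0 -> t \notin B ->
  bad_sep_wit m x y setT B a b c t.
Proof.
move=> [BU [aB [bB [mab [cUB [bad [maxA [Bsub [sUB [sep minB]]]]]]]]]] mst tB.
have tUB : t \in setT :\: B by rewrite inE tB inE.
do 9!split => //; split; first exact (separator_adj m_sym sep mst tUB).
move=> B' ltB' sep'; apply: (minB B' ltB').
have sUB' : s \in setT :\: B'.
  case/setDP: sUB => _ sB; rewrite in_setD in_setT andbT; apply: contra sB.
  exact: (subsetP (proper_sub ltB')).
have mts : m t s != 0 by rewrite m_sym.
exact (separator_adj m_sym sep' mts sUB').
Qed.

Lemma bad_sep_wit_component_avoid U U' B B' a b c f a' b' c' f' k :
  bad_sep_wit m x y U B a b c f -> bad_sep_wit m x y U' B' a' b' c' f' ->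
  connect (adj_minus m U B) f k -> k \notin B'.
Proof.
move=> W W' fk; apply: contra (bad_sep_wit_component W fk).
exact: bad_sep_wit_nbr W'.
Qed.

Lemma max_irr_simplex_lift V A :
  max_irr_simplex m V A -> x \in A -> y \in A -> (forall w, nbr_xy w -> w \in V) ->
  max_irr_simplex m setT A.
Proof.
move=> [_ [irrA maxA]] xA yA nbrV; split; first exact: subsetT.
split=> // A' _ irrA' ltAA'; apply: (maxA A') => //.
apply/subsetP => w wA'; apply: nbrV; have [simplexA' _] := irrA'.
by rewrite /nbr_xy !simplexA' // (subsetP (proper_sub ltAA')).
Qed.

(* Otherwise B minus that vertex would still separate c from f. *)
Lemma bad_sep_wit_attached B a b c f b0 :
  bad_sep_wit m x y setT B a b c f -> b0 \in B ->
  exists2 k, connect (adj_minus m setT B) f k & m b0 k != 0.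
Proof.
move=> W b0B; have [_ [_ [_ [_ [cUB [_ [_ [_ [_ [sep minB]]]]]]]]]] := W.
apply/exists_inP; apply: contraT => /exists_inPn nattached; exfalso.
apply: (minB (B :\ b0) (properD1 b0B)).
pose K := [set k | connect (adj_minus m setT B) f k].
have compK k : k \in K -> separator m setT B c k.
  by rewrite inE => fk; exact: (separator_component m_sym sep fk).
apply: (@separator_of_closed _ _ K).
- move=> k /compK /separator_focus_mem; rewrite !inE => /andP[kB _].
  by rewrite (negbTE kB) andbF.
- rewrite in_setU negb_or; apply/andP; split.
    by apply/negP => /compK /separator_nonadj; rewrite m_diag.
  by move: cUB; rewrite !inE => /andP[/negbTE-> _]; rewrite andbF.
- by rewrite inE connect0.
- move=> s t tK; rewrite !inE negb_or => /andP[sK /nandP[/negPn/eqP-> | sB]].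
    by move: tK; rewrite inE => /nattached /negPn /eqP.
  apply/eqP; apply: contraNT sK => mst.
  have ft : connect (adj_minus m setT B) f t by move: tK; rewrite inE.
  apply: connect_trans ft (connect1 _).
  have /separator_focus_mem tUB := compK t tK.
  by rewrite /adj_minus /= tUB !inE sB m_sym mst.
Qed.

Lemma bad_sep_wit_focus_sub B B' a b c a' b' c' f :
  bad_sep_wit m x y setT B a b c f -> bad_sep_wit m x y setT B' a' b' c' f ->
  B \subset B'.
Proof.
move=> W W'.
have KK' : {subset connect (adj_minus m setT B) f <= connect (adj_minus m setT B') f}.
  by apply: adj_minus_connect_sub => k; apply: bad_sep_wit_component_avoid W W'.
apply/subsetP => b0 b0B; apply/negPn/negP => b0B'.
have [k fk mk] := bad_sep_wit_attached W b0B.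
have /(bad_sep_wit_component_avoid W' W) : connect (adj_minus m setT B') f b0.
  apply: connect_trans (KK' _ fk) (connect1 _).
  by rewrite /adj_minus /= !inE (bad_sep_wit_component_avoid W W' fk) b0B' m_sym mk.
by rewrite b0B.
Qed.

Lemma bad_sep_wit_focus_uniq B B' a b c a' b' c' f :
  bad_sep_wit m x y setT B a b c f -> bad_sep_wit m x y setT B' a' b' c' f -> B = B'.
Proof.
move=> W W'; apply/eqP.
by rewrite eqEsubset (bad_sep_wit_focus_sub W W') (bad_sep_wit_focus_sub W' W).
Qed.

End BadSeparatorWitnesses.

Section Center.
Variables (T : finType) (m : T -> T -> nat) (x y : T).
Hypotheses (m_sym : forall s t, m s t = m t s) (m_diag : forall s, m s s = 1).
Hypothesis mxy : m x y = 5.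
Variables (BS : {set {set T}}) (F : {set T} -> {set T}).
Hypothesis BSE : forall B, B \in BS <-> bad_separator m x y setT B.
Hypothesis FE : forall B f, f \in F B <-> good_focus m x y setT B f.
Implicit Types (B : {set T}).

Definition center : {set T} := ~: \bigcup_(B in BS) F B.

Lemma focus_notin_center B v : B \in BS -> v \in F B -> v \notin center.
Proof. by move=> BSB vF; rewrite inE negbK; apply/bigcupP; exists B. Qed.

Lemma notin_centerP v : v \notin center -> exists2 B, B \in BS & v \in F B.
Proof. by rewrite inE negbK => /bigcupP. Qed.

Lemma focus_not_nbr B v : v \in F B -> ~~ nbr_xy m x y v.
Proof.
by case/FE => a [b [c W]]; apply: (bad_sep_wit_component m_sym m_diag mxy W (connect0 _ _)).
Qed.

Lemma focus_notin_sep B v : v \in F B -> v \notin B.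
Proof.
case/FE => a [b [c [_ [_ [_ [_ [_ [_ [_ [_ [_ [sep _]]]]]]]]]]]].
by case/setDP: (separator_focus_mem sep).
Qed.

Lemma nbr_in_center v : nbr_xy m x y v -> v \in center.
Proof.
move=> nbrv; apply: contraT => /notin_centerP[B _ /focus_not_nbr].
by rewrite nbrv.
Qed.

Lemma sep_sub_center B : B \in BS -> B \subset center.
Proof.
case/BSE => a [b [c [f W]]]; apply/subsetP => v vB.
exact/nbr_in_center/(bad_sep_wit_nbr m_sym W vB).
Qed.

Lemma center_cover : center :|: \bigcup_(B in BS) (B :|: F B) = setT.
Proof.
apply/setP => v; rewrite in_setT in_setU; apply/orP.
case: (boolP (v \in center)) => [|/notin_centerP[B BSB vF]]; first by left.
by right; apply/bigcupP; exists B; rewrite // inE vF orbT.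
Qed.

Lemma center_capI B : B \in BS -> center :&: (B :|: F B) = B.
Proof.
move=> BSB; apply/setP => v; rewrite in_setI in_setU.
case: (boolP (v \in B)) => vB /=; first by rewrite (subsetP (sep_sub_center BSB)).
by case: (boolP (v \in F B)) => vF; rewrite ?andbF // (negbTE (focus_notin_center BSB vF)).
Qed.

Lemma sep_proper_center B : B \in BS -> B \proper center.
Proof.
move=> BSB; rewrite properE sep_sub_center //=; apply/subsetPn.
have [a [b [c [f W]]]] := (BSE B).1 BSB.
exists c; first by apply: nbr_in_center; case: (bad_sep_wit_vertex m_sym m_diag mxy W) => ->;
  [exact: nbr_xy_x | exact: nbr_xy_y].
by have [_ [_ [_ [_ [/setDP[_ cB] _]]]]] := W.
Qed.

Lemma sep_proper_leaf B : B \in BS -> B \proper B :|: F B.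
Proof.
move=> BSB; rewrite properE subsetUl /=; apply/subsetPn.
have [a [b [c [f W]]]] := (BSE B).1 BSB.
have fF : f \in F B by apply/FE; exists a, b, c.
by exists f; [rewrite inE fF orbT | exact: focus_notin_sep fF].
Qed.

Lemma leaf_capI_sub B B' : B \in BS -> B' \in BS -> B != B' ->
  (B :|: F B) :&: (B' :|: F B') \subset center.
Proof.
move=> BSB BSB' neqBB'; apply/subsetP => v /setIP[].
rewrite !in_setU => /orP[vB|vF] /orP[vB'|vF'].
- exact: (subsetP (sep_sub_center BSB)).
- exact: (subsetP (sep_sub_center BSB)).
- exact: (subsetP (sep_sub_center BSB')).
have [a [b [c W]]] := (FE B v).1 vF.
have [a' [b' [c' W']]] := (FE B' v).1 vF'.
by rewrite (bad_sep_wit_focus_uniq m_sym m_diag mxy W W') eqxx in neqBB'.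
Qed.

Lemma edge_in_leaf s t : m s t != 0 -> s \notin center ->
  exists B, B \in BS /\ s \in B :|: F B /\ t \in B :|: F B.
Proof.
move=> mst /notin_centerP[B BSB sF]; exists B; split => //.
split; first by rewrite inE sF orbT.
rewrite in_setU; case: (boolP (t \in B)) => //= tB.
have [a [b [c W]]] := (FE B s).1 sF.
by apply/FE; exists a, b, c; exact: (bad_sep_wit_focus_adj m_sym W mst tB).
Qed.

Lemma edge_covered s t : m s t != 0 ->
  (s \in center /\ t \in center) \/
  (exists B, B \in BS /\ s \in B :|: F B /\ t \in B :|: F B).
Proof.
move=> mst; case: (boolP (s \in center)) => sS; last by right; exact: edge_in_leaf.
case: (boolP (t \in center)) => tS; first by left.
have mts : m t s != 0 by rewrite m_sym.
by right; have [B [BSB [tB sB]]] := edge_in_leaf mts tS; exists B.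
Qed.

Lemma center_unique S0 :
  S0 :|: \bigcup_(B in BS) (B :|: F B) = setT ->
  (forall B, B \in BS -> S0 :&: (B :|: F B) = B /\ B \proper S0) ->
  S0 = center.
Proof.
move=> S0cover S0cap; apply/setP => v; apply/idP/idP => vS0.
  apply: contraT => /notin_centerP[B BSB vF].
  have : v \in S0 :&: (B :|: F B) by rewrite in_setI vS0 in_setU vF orbT.
  by rewrite (S0cap B BSB).1 (negbTE (focus_notin_sep vF)).
apply: contraT => vS0'.
have : v \in S0 :|: \bigcup_(B in BS) (B :|: F B) by rewrite S0cover.
rewrite in_setU (negbTE vS0') /= => /bigcupP[B BSB].
rewrite in_setU => /orP[vB|vF].
  by have [_ /proper_sub/subsetP/(_ v vB)] := S0cap B BSB; rewrite (negbTE vS0').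
by move: vS0; rewrite (negbTE (focus_notin_center BSB vF)).
Qed.

Lemma center_separator_lift B a b c f :
  bad_sep_wit m x y center B a b c f -> separator m setT B c f.
Proof.
move=> W; have [_ [_ [_ [_ [cSB [_ [_ [_ [_ [sep _]]]]]]]]]] := W.
pose K := [set k | connect (adj_minus m center B) f k].
have compK k : k \in K -> separator m center B c k.
  by rewrite inE => fk; exact: (separator_component m_sym sep fk).
apply: (@separator_of_closed _ _ K).
- by move=> k /compK /separator_focus_mem /setDP[].
- rewrite in_setU negb_or; apply/andP; split; last by case/setDP: cSB.
  by apply/negP => /compK /separator_nonadj; rewrite m_diag.
- by rewrite inE connect0.
move=> s t tK; rewrite in_setU negb_or => /andP[sK sB].
have ft : connect (adj_minus m center B) f t by move: tK; rewrite inE.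
have /separator_focus_mem /setDP[tS tB] := compK t tK.
apply/eqP; apply: contraNT sK => mst; case: (boolP (s \in center)) => sS.
  rewrite inE; apply: connect_trans ft (connect1 _).
  by rewrite /adj_minus /= !in_setD tB tS sB sS m_sym mst.
have [B1 [BSB1 [_]]] := edge_in_leaf mst sS.
rewrite in_setU => /orP[tB1|tF1]; last by rewrite (negbTE (focus_notin_center BSB1 tF1)) in tS.
have [a1 [b1 [c1 [f1 W1]]]] := (BSE B1).1 BSB1.
by rewrite (negbTE (bad_sep_wit_component_avoid m_sym m_diag mxy W W1 ft)) in tB1.
Qed.

Lemma center_bad_sep_wit_lift B a b c f :
  bad_sep_wit m x y center B a b c f -> bad_sep_wit m x y setT B a b c f.
Proof.
move=> W; have sepT := center_separator_lift W.
case: W => [BS0 [aB [bB [mab [cSB [bad [maxA [Bsub [fSB [sep minB]]]]]]]]]].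
have [_ [xA yA]] := bad.
have [cS _] := setDP cSB; have [fS _] := setDP fSB.
split; first exact: subsetT.
do 3!split => //; split; first by rewrite !in_setD in_setT andbT; case/setDP: cSB.
split => //; split; first exact: max_irr_simplex_lift maxA xA yA nbr_in_center.
split.
  apply: subset_trans Bsub _; apply: setUS; apply/subsetP => v.
  by rewrite !inE => /andP[_ ->].
split; first by rewrite !in_setD in_setT andbT; case/setDP: fSB.
split=> // B' ltB' sep'; apply: (minB B' ltB').
apply: separator_restrict sep' (subsetT _) _ cS fS.
exact: subset_trans (proper_sub ltB') BS0.
Qed.

Lemma center_no_bad_separator B : ~ bad_separator m x y center B.
Proof.
move=> [a [b [c [f W]]]]; have W' := center_bad_sep_wit_lift W.
have BSB : B \in BS by apply/BSE; exists a, b, c, f.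
have fF : f \in F B by apply/FE; exists a, b, c.
have [_ [_ [_ [_ [_ [_ [_ [_ [/setDP[fS _] _]]]]]]]]] := W.
by rewrite (negbTE (focus_notin_center BSB fF)) in fS.
Qed.

Lemma center_star_decomposition :
  let S0 := center in
  (S0 :|: \bigcup_(B in BS) (B :|: F B) = setT) /\
  (forall B, B \in BS ->
     S0 :&: (B :|: F B) = B /\ B \proper S0 /\ B \proper B :|: F B) /\
  (forall B B', B \in BS -> B' \in BS -> B != B' ->
     (B :|: F B) :&: (B' :|: F B') \subset S0) /\
  (forall s t, m s t != 0 ->
     (s \in S0 /\ t \in S0) \/
     (exists B, B \in BS /\ s \in B :|: F B /\ t \in B :|: F B)) /\
  (x \in S0 /\ y \in S0) /\
  (forall B, ~ bad_separator m x y S0 B).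
Proof.
split; first exact: center_cover.
split; first by move=> B BSB; rewrite center_capI // sep_proper_center // sep_proper_leaf.
split; first exact: leaf_capI_sub.
split; first exact: edge_covered.
split; last exact: center_no_bad_separator.
by split; apply: nbr_in_center; [exact: nbr_xy_x | exact: nbr_xy_y].
Qed.

End Center.

Theorem theorem5p10 (T : finType) (m : T -> T -> nat) (x y : T) :
  coxeter_matrix m ->
  m x y = 5 ->
  bad_edge_ok m x y ->
  forall (BS : {set {set T}}),
  (forall B : {set T}, B \in BS <-> bad_separator m x y setT B) ->
  forall (F : {set T} -> {set T}),
  (forall (B : {set T}) (f : T), f \in F B <-> good_focus m x y setT B f) ->
  let Si (B : {set T}) : {set T} := B :|: F B in
  exists! S0 : {set T},
    (S0 :|: \bigcup_(B in BS) Si B = setT) /\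
    (forall B, B \in BS ->
       S0 :&: Si B = B /\ B \proper S0 /\ B \proper Si B) /\
    (forall B B', B \in BS -> B' \in BS -> B != B' ->
       Si B :&: Si B' \subset S0) /\
    (forall s t, m s t != 0 ->
       (s \in S0 /\ t \in S0) \/
       (exists B, B \in BS /\ s \in Si B /\ t \in Si B)) /\
    (x \in S0 /\ y \in S0) /\
    (forall B : {set T}, ~ bad_separator m x y S0 B).
Proof.
move=> [m_diag [m_sym _]] mxy _ BS BSE F FE Si.
exists (center BS F); split; first exact: (center_star_decomposition m_sym m_diag mxy BSE FE).
move=> S0 [S0cover [S0cap _]]; apply/esym/(center_unique FE) => // B BSB.
by have [-> [ltBS0 _]] := S0cap B BSB.
Qed.
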